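(* In the two-unicast setting, suppose $k_{1-2}+k_{2-1}\le\min(k_{12-1},k_{12-2})$. If $k_{1-2}\le k_{1-1}$, then every pair of nonnegative integers $(R_1,R_2)$ with $R_1\le k_{1-1}$, $R_2\le k_{2-1}$, $R_1+R_2\le k_{12-1}$ is achievable. Symmetrically, if $k_{2-1}\le k_{2-2}$, then every pair of nonnegative integers $(R_1,R_2)$ with $R_1\le k_{1-2}$, $R_2\le k_{2-2}$, $R_1+R_2\le k_{12-2}$ is achievable.
   Context: $G=(V,E)$ is a directed acyclic network with unit-capacity edges (each carrying one symbol of $GF(q)$ per use), sources $s_1,s_2$ (no incoming edges), terminals $t_1,t_2$ (no outgoing edges); $t_i$ wants the message of $s_i$. For $N_1,N_2\subseteq\{1,2\}$, $k_{N_1-N_2}$ is the min-cut from $\{s_i:i\in N_1\}$ to $\{t_j:j\in N_2\}$. A linear network code over $GF(q)$: symbols on edges leaving a non-source node are $GF(q)$-linear combinations of the node's incoming symbols; symbols on edges leaving $s_i$ are $GF(q)$-linear combinations of $s_i$'s message symbols. $(R_1,R_2)$ is achievable if for some finite field $GF(q)$ there is a linear network code such that, when $s_i$ observes $R_i$ independent symbols of $GF(q)$, $t_1$ uniquely recovers $s_1$'s message and $t_2$ uniquely recovers $s_2$'s message. *)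

From HB Require Import structures.
From mathcomp Require Import all_boot all_order all_algebra.
Set Implicit Arguments. Unset Strict Implicit. Unset Printing Implicit Defensive.
Import GRing.Theory.

(* A network: finite node type V, finite edge type E (parallel edges allowed),
   each edge e goes from [tl e] to [hd e]; every edge has unit capacity. *)

Definition erel_avoid (V E : finType) (tl hd : E -> V) (C : {set E}) : rel V :=
  fun x y => [exists e, [&& e \notin C, tl e == x & hd e == y]].

Definition acyclic (V E : finType) (tl hd : E -> V) : Prop :=
  forall e : E, ~~ connect (erel_avoid tl hd set0) (hd e) (tl e).

Definition is_cut (V E : finType) (tl hd : E -> V) (S T : {set V}) (C : {set E}) : bool :=
  [forall s in S, forall t in T, ~~ connect (erel_avoid tl hd C) s t].

Definition mincut (V E : finType) (tl hd : E -> V) (S T : {set V}) : nat :=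
  \big[minn/#|E|]_(C : {set E} | is_cut tl hd S T C) #|C|.

(* y : E -> F is the edge-symbol assignment induced by the linear network code
   (a1, a2, b) when s1 sends x1 and s2 sends x2:
   edges out of s_i carry a linear combination (coefficients a_i e j) of s_i's
   message symbols; any other edge e carries the linear combination, with
   coefficients b d e, of the symbols on the edges d entering tl e.
   (On a DAG this assignment exists and is unique.) *)
Definition induced_symbols (F : fieldType) (V E : finType) (tl hd : E -> V)
    (s1 s2 : V) (R1 R2 : nat)
    (a1 : E -> 'I_R1 -> F) (a2 : E -> 'I_R2 -> F) (b : E -> E -> F)
    (x1 : 'rV[F]_R1) (x2 : 'rV[F]_R2) (y : E -> F) : Prop :=
  forall e : E,
    y e = (if tl e == s1 then \sum_(j < R1) a1 e j * x1 ord0 j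
           else if tl e == s2 then \sum_(j < R2) a2 e j * x2 ord0 j
           else \sum_(d : E | hd d == tl e) b d e * y d)%R.

Definition achievable (V E : finType) (tl hd : E -> V) (s1 s2 t1 t2 : V)
    (R1 R2 : nat) : Prop :=
  exists (F : finFieldType) (a1 : E -> 'I_R1 -> F) (a2 : E -> 'I_R2 -> F)
         (b : E -> E -> F),
    (forall x1 x2 x1' x2' y y',
        induced_symbols tl hd s1 s2 a1 a2 b x1 x2 y ->
        induced_symbols tl hd s1 s2 a1 a2 b x1' x2' y' ->
        (forall d, hd d == t1 -> y d = y' d) -> x1 = x1') /\
    (forall x1 x2 x1' x2' y y',
        induced_symbols tl hd s1 s2 a1 a2 b x1 x2 y ->
        induced_symbols tl hd s1 s2 a1 a2 b x1' x2' y' ->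
        (forall d, hd d == t2 -> y d = y' d) -> x2 = x2').

From HB Require Import structures.
From mathcomp Require Import all_boot all_order all_algebra.
From mathcomp Require Import zify.
Set Implicit Arguments. Unset Strict Implicit. Unset Printing Implicit Defensive.
Import GRing.Theory.

(* Messages are vectors of F^n, n = R1 + R2 (first R1 coordinates for s1, last
   R2 for s2), and a linear code is described by the global coding vectors
   f e in F^n of the edges.  Over a field larger than the number of pairs
   (edge set, coordinate set), the vectors can be chosen edge by edge along a
   topological order so that each one escapes every span of earlier vectors
   not already containing its inputs (avoidance lemma).  For such a generic
   code, the span entering a terminal t has rank at least r1 + r2 for every
   (r1, r2) in the min-cut region of t ([terminal_rank]).  At t1 this gives
   full rank, so t1 decodes both messages.  At t2 the s1-part of the span is
   bounded by the s1-t2 min-cut, and the cut condition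
   k(s1,t2) + k(s2,t1) <= k({s1,s2},t2) leaves room for the R2 coordinates of
   s2, which thus lie in the span: t2 decodes x2.  The second half of the
   theorem is the first one for the network with the two sessions exchanged. *)

Section Reachability.
Variables (V E : finType) (tl hd : E -> V).

Local Notation reach C := (connect (erel_avoid tl hd C)).

Lemma reach_subset (C C' : {set E}) u v :
  C \subset C' -> reach C' u v -> reach C u v.
Proof.
move=> sCC'; apply: connect_sub => x y /existsP[e /and3P[eC /eqP tx /eqP hy]].
apply: connect1; apply/existsP; exists e; rewrite tx hy !eqxx !andbT.
by apply: contra eC; apply: (subsetP sCC').
Qed.

Lemma reach_edge (C : {set E}) u d :
  d \notin C -> reach C u (tl d) -> reach C u (hd d).
Proof.
move=> dC r; apply: connect_trans r (connect1 _); apply/existsP; exists d.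
by rewrite dC !eqxx.
Qed.

Lemma reach_last_edge (C : {set E}) u v : reach C u v -> u != v ->
  exists d, [/\ d \notin C, hd d = v & reach C u (tl d)].
Proof.
case/connectP=> p; elim/last_ind: p => [|p z _] /=; first by move=> _ ->; rewrite eqxx.
rewrite rcons_path last_rcons => /andP[pp /existsP[d /and3P[dC /eqP td /eqP hdz]]] -> _.
by exists d; split=> //; rewrite td; apply/connectP; exists p.
Qed.

Lemma reach_setT u v : reach setT u v -> u = v.
Proof. by case/connectP=> [[|z p]] //= /andP[/existsP[d]]; rewrite inE. Qed.

Lemma is_cut_single u w (C : {set E}) :
  is_cut tl hd [set u] [set w] C = ~~ reach C u w.
Proof.
apply/forallP/idP => [/(_ u)|h s]; first by rewrite inE eqxx /= => /forallP/(_ w); rewrite inE eqxx.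
by apply/implyP; rewrite inE => /eqP->; apply/forallP=> t; apply/implyP; rewrite inE => /eqP->.
Qed.

Lemma is_cut_pair u1 u2 w (C : {set E}) :
  is_cut tl hd [set u1; u2] [set w] C = ~~ reach C u1 w && ~~ reach C u2 w.
Proof.
apply/forallP/andP => [h|[h1 h2] s].
  split; [move: (h u1)|move: (h u2)]; rewrite !inE eqxx ?orbT /= => /forallP/(_ w);
  by rewrite inE eqxx.
apply/implyP; rewrite !inE => /orP[]/eqP->; apply/forallP=> t; apply/implyP;
by rewrite inE => /eqP->.
Qed.

Lemma mincut_le (S T : {set V}) (C : {set E}) :
  is_cut tl hd S T C -> mincut tl hd S T <= #|C|.
Proof. exact: (@Order.TotalTheory.bigmin_le_cond _ nat _ _ _ _ (fun C : {set E} => #|C|)). Qed.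

Lemma mincut_attained (S T : {set V}) : [disjoint S & T] ->
  exists2 C, is_cut tl hd S T C & #|C| = mincut tl hd S T.
Proof.
move=> dST; have cutT : is_cut tl hd S T setT.
  apply/forallP=> s; apply/implyP=> sS; apply/forallP=> t; apply/implyP=> tT.
  by apply/negP=> /reach_setT st; move: (disjointFr dST sS); rewrite st tT.
have [C cC minC] := @Order.TotalTheory.eq_bigmin _ nat _ #|E| _ _
  (fun C : {set E} => #|C|) cutT (fun C _ => max_card (mem C)).
by exists C => //; exact: esym minC.
Qed.

(* Min-cuts are subadditive in the sources: two cuts together form a cut. *)
Lemma mincut_pair_le u1 u2 w : u1 != w -> u2 != w ->
  mincut tl hd [set u1; u2] [set w]
    <= mincut tl hd [set u1] [set w] + mincut tl hd [set u2] [set w].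
Proof.
move=> u1w u2w; have disj u : u != w -> [disjoint [set u] & [set w]] by rewrite disjoints1 inE.
have [C1 cut1 <-] := mincut_attained (disj _ u1w).
have [C2 cut2 <-] := mincut_attained (disj _ u2w).
apply: leq_trans (leq_card_setU _ _); apply: mincut_le; rewrite is_cut_pair.
rewrite is_cut_single in cut1; rewrite is_cut_single in cut2.
by rewrite (contra (reach_subset (subsetUl C1 C2)) cut1)
           (contra (reach_subset (subsetUr C1 C2)) cut2).
Qed.

End Reachability.

Section TopologicalOrder.
Variables (V E : finType) (tl hd : E -> V).
Hypothesis acyclic_net : acyclic tl hd.

Definition ancestors (e : E) : {set E} :=
  [set d | connect (erel_avoid tl hd set0) (hd d) (tl e)].

(* A numbering of the edges, injective and increasing along every path:
   primarily by number of ancestors, ties broken by the enumeration rank. *)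
Definition topo_index (e : E) : nat := #|ancestors e| * #|E| + enum_rank e.

(* In a DAG an edge feeding into e has strictly fewer ancestors than e,
   since it is an ancestor of e but not of itself. *)
Lemma ancestors_lt d e : hd d = tl e -> #|ancestors d| < #|ancestors e|.
Proof.
move=> hde; apply: proper_card; apply/properP; split.
  apply/subsetP=> x; rewrite !inE -hde; apply: reach_edge; by rewrite inE.
by exists d; rewrite !inE; [rewrite hde connect0 | exact: acyclic_net].
Qed.

Lemma topo_index_lt d e : hd d = tl e -> topo_index d < topo_index e.
Proof.
move=> /ancestors_lt lt; rewrite /topo_index.
have rd : enum_rank d < #|E| := ltn_ord _; have re : enum_rank e < #|E| := ltn_ord _.
have : (#|ancestors d|).+1 * #|E| <= #|ancestors e| * #|E| by rewrite leq_mul2r lt orbT.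
rewrite mulSn; set a := #|ancestors d| * _; set b := #|ancestors e| * _; lia.
Qed.

Lemma topo_index_inj : injective topo_index.
Proof.
move=> d e eqde; have := congr1 (modn^~ #|E|) eqde.
by rewrite /topo_index !modnMDl !modn_small // => /val_inj/enum_rank_inj.
Qed.

Lemma topo_index_bound e : topo_index e < #|E|.+1 * #|E|.
Proof.
rewrite /topo_index; have re : enum_rank e < #|E| := ltn_ord _.
have : #|ancestors e| * #|E| <= #|E| * #|E| by rewrite leq_mul2r max_card orbT.
rewrite mulSn; set a := #|ancestors e| * _; lia.
Qed.

Lemma dag_ind (P : E -> Prop) :
  (forall e, (forall d, hd d = tl e -> P d) -> P e) -> forall e, P e.
Proof.
move=> IH; suff below m e : topo_index e < m -> P e by move=> e; apply: (below _ e).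
elim: m e => // m IHm e lt_em; apply: IH => d /topo_index_lt lt_de; apply: IHm.
exact: leq_trans lt_de lt_em.
Qed.

End TopologicalOrder.

Notation unit_row j := (delta_mx (0%R : 'I_1) j).

Section SpanMatrices.
Local Open Scope ring_scope.
Variables (E : finType) (F : fieldType) (n : nat).
Implicit Types (A : {set E}) (J : {set 'I_n}) (g : E -> 'rV[F]_n).

Definition edge_mx g A : 'M[F]_(#|E|, n) :=
  \matrix_(i, j) (if enum_val i \in A then g (enum_val i) 0 j else 0).

Definition unit_mx J : 'M[F]_n := \matrix_(i, j) ((i \in J) && (i == j))%:R.

Definition span_mx g A J := col_mx (edge_mx g A) (unit_mx J).

Lemma row_edge_mx g A i :
  row i (edge_mx g A) = if enum_val i \in A then g (enum_val i) else 0.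
Proof. by apply/rowP=> j; rewrite !mxE; case: ifP; rewrite ?mxE. Qed.

Lemma row_unit_mx J i : row i (unit_mx J) = if i \in J then unit_row i else 0.
Proof. by apply/rowP=> j; rewrite !mxE; case: ifP => /= _; rewrite ?mxE // eq_sym. Qed.

Lemma edge_mx_subP g A m (M : 'M_(m, n)) :
  (forall a, a \in A -> (g a <= M)%MS) -> (edge_mx g A <= M)%MS.
Proof.
by move=> sAM; apply/row_subP=> i; rewrite row_edge_mx; case: ifP => [/sAM|_]; rewrite ?sub0mx.
Qed.

Lemma unit_mx_subP J m (M : 'M_(m, n)) :
  (forall j, j \in J -> (unit_row j <= M)%MS) -> (unit_mx J <= M)%MS.
Proof.
by move=> sJM; apply/row_subP=> i; rewrite row_unit_mx; case: ifP => [/sJM|_]; rewrite ?sub0mx.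
Qed.

Lemma edge_mx_sub g A a : a \in A -> (g a <= edge_mx g A)%MS.
Proof.
by move=> aA; have := row_sub (enum_rank a) (edge_mx g A); rewrite row_edge_mx enum_rankK aA.
Qed.

Lemma unit_mx_sub J j : j \in J -> (unit_row j <= unit_mx J)%MS.
Proof. by move=> jJ; have := row_sub j (unit_mx J); rewrite row_unit_mx jJ. Qed.

Lemma span_mx_sub_edge g A J a : a \in A -> (g a <= span_mx g A J)%MS.
Proof. by move=> /(edge_mx_sub g)/submx_trans; apply; rewrite -addsmxE addsmxSl. Qed.

Lemma span_mx_sub_unit g A J j : j \in J -> (unit_row j <= span_mx g A J)%MS.
Proof. by move=> /unit_mx_sub/submx_trans; apply; rewrite -addsmxE addsmxSr. Qed.

Lemma span_mx_subP g A J m (M : 'M_(m, n)) :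
  (forall a, a \in A -> (g a <= M)%MS) ->
  (forall j, j \in J -> (unit_row j <= M)%MS) -> (span_mx g A J <= M)%MS.
Proof. by move=> sAM sJM; rewrite col_mx_sub edge_mx_subP ?unit_mx_subP. Qed.

Lemma span_mx_mono g A A' J J' :
  A \subset A' -> J \subset J' -> (span_mx g A J <= span_mx g A' J')%MS.
Proof.
move=> sAA' sJJ'; apply: span_mx_subP => [a /(subsetP sAA')|j /(subsetP sJJ')].
  exact: span_mx_sub_edge.
exact: span_mx_sub_unit.
Qed.

Lemma span_mx_eq g g' A J : {in A, g =1 g'} -> span_mx g A J = span_mx g' A J.
Proof.
move=> eqAg; congr col_mx; apply/matrixP=> i j; rewrite !mxE.
by case: ifP => // /eqAg->.
Qed.

Lemma rank_edge_mx g A : (\rank (edge_mx g A) <= #|A|)%N.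
Proof.
have sub_sum : (edge_mx g A <= \sum_(a in A) <<g a>>)%MS.
  by apply: edge_mx_subP => a aA; apply: (sumsmx_sup a); rewrite ?genmxE.
apply: leq_trans (mxrankS sub_sum) _; rewrite -sum1_card.
apply: leq_trans (leq_of_leqif (mxrank_sum_leqif _)) _.
by apply: leq_sum => a _; rewrite /= genmxE rank_leq_row.
Qed.

(* The unit vectors indexed by J are independent: X X^T = 1 for the matrix X
   whose rows are these unit vectors. *)
Lemma rank_unit_mx J : (#|J| <= \rank (unit_mx J))%N.
Proof.
pose X : 'M[F]_(#|J|, n) := \matrix_(k, j) (enum_val k == j)%:R.
have XXt : X *m X^T = 1%:M.
  apply/matrixP=> k l; rewrite !mxE (bigD1 (enum_val k)) //= big1 => [|j kj].
    by rewrite /X !mxE eqxx mul1r addr0 eq_sym (inj_eq enum_val_inj).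
  by rewrite /X !mxE eq_sym (negbTE kj) mul0r.
have sXJ : (X <= unit_mx J)%MS.
  apply/row_subP=> k; have -> : row k X = unit_row (enum_val k).
    by apply/rowP=> j; rewrite /X !mxE [j == _]eq_sym.
  exact: unit_mx_sub (enum_valP k).
by rewrite -(mxrank1 F #|J|) -XXt; apply: leq_trans (mxrankM_maxl _ _) (mxrankS sXJ).
Qed.

Lemma edge_mx_mul g A (X : 'cV[F]_n) i :
  (edge_mx g A *m X) i 0 = if enum_val i \in A then (g (enum_val i) *m X) 0 0 else 0.
Proof.
have -> : (edge_mx g A *m X) i 0 = row i (edge_mx g A *m X) 0 0 by rewrite [RHS]mxE.
rewrite row_mul row_edge_mx.
by case: ifP; rewrite ?mul0mx mxE.
Qed.

Lemma unit_mx_mul J (X : 'cV[F]_n) j :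
  (unit_mx J *m X) j 0 = if j \in J then X j 0 else 0.
Proof.
have -> : (unit_mx J *m X) j 0 = row j (unit_mx J *m X) 0 0 by rewrite [RHS]mxE.
rewrite row_mul row_unit_mx.
by case: ifP => _; [rewrite -rowE mxE | rewrite mul0mx mxE].
Qed.

End SpanMatrices.

Section Avoidance.
Local Open Scope ring_scope.

Lemma exists_notin (T : finType) (s : seq T) : (size s < #|T|)%N -> exists x, x \notin s.
Proof.
move=> small; apply/existsP; apply: contraTT small; rewrite negb_exists => /forallP ins.
rewrite -leqNgt; apply: leq_trans (card_size s); apply: subset_leq_card.
by apply/subsetP=> x _; move: (ins x); rewrite negbK.
Qed.

Lemma line_meets_twice (F : fieldType) k n (U : 'M[F]_(k, n)) (v w : 'rV_n) (l l' : F) :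
  l != l' -> ((v + l *: w)%R <= U)%MS -> ((v + l' *: w)%R <= U)%MS -> (w <= U)%MS.
Proof.
move=> neq_ll' Ul Ul'; have : ((l - l') *: w <= U)%MS.
  have -> : (l - l') *: w = (v + l *: w) - (v + l' *: w).
    by rewrite opprD addrACA subrr add0r scalerBl.
  by apply: addmx_sub; rewrite ?eqmx_opp.
by move/(scalemx_sub (l - l')^-1); rewrite scalerA mulVf ?subr_eq0 // scale1r.
Qed.

Lemma avoid_subspaces_seq (F : finFieldType) m k n (G : 'M[F]_(m, n)) (I : eqType)
    (U_ : I -> 'M[F]_(k, n)) (s : seq I) : (size s < #|F|)%N ->
  exists c : 'rV_m, forall i, i \in s -> ~~ (G <= U_ i)%MS -> ~~ (c *m G <= U_ i)%MS.
Proof.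
elim: s => [|i s IH] /= small; first by exists 0.
have [c cG_s] := IH (ltnW small).
have [GUi|GnUi] := boolP (G <= U_ i)%MS.
  by exists c => i'; rewrite inE => /predU1P[->|/cG_s //]; rewrite GUi.
have [cGUi|cGnUi] := boolP (c *m G <= U_ i)%MS; last first.
  by exists c => i'; rewrite inE => /predU1P[->|/cG_s].
have [r rnUi] : exists r, ~~ (row r G <= U_ i)%MS.
  apply/existsP; apply: contraNT GnUi; rewrite negb_exists => /forallP rU.
  by apply/row_subP=> r; move: (rU r); rewrite negbK.
(* move c along the line c + l e_r, avoiding one bad value of l per subspace *)
pose c_ l : 'rV_m := c + l *: unit_row r.
have c_G l : c_ l *m G = c *m G + l *: row r G by rewrite mulmxDl -scalemxAl -rowE.
pose bad i' := [pick l | (c_ l *m G <= U_ i')%MS].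
have [l l_fresh] : exists l, l \notin 0 :: pmap bad s.
  apply: exists_notin; rewrite /= size_pmap.
  by apply: (leq_ltn_trans _ small); rewrite ltnS count_size.
have l_nz : l != 0 by move: l_fresh; rewrite inE negb_or => /andP[].
exists (c_ l) => i'; rewrite inE => /predU1P[->|i's] Gi'; apply/negP; rewrite c_G => hit.
  by move/negP: rnUi; apply; apply: (line_meets_twice l_nz hit); rewrite scale0r addr0.
case bad_i': (bad i') => [l'|]; last first.
  by move: bad_i'; rewrite /bad; case: pickP => // /(_ l); rewrite c_G hit.
have hit' : ((c *m G + l' *: row r G)%R <= U_ i')%MS.
  by move: bad_i'; rewrite /bad; case: pickP => // l'' + [<-]; rewrite c_G.
have neq_ll' : l != l'.
  apply: contraNneq l_fresh => ->; rewrite inE mem_pmap; apply/orP; right.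
  by apply/mapP; exists i'.
have rUi' := line_meets_twice neq_ll' hit hit'.
move/negP: (cG_s i' i's Gi'); apply.
rewrite -[c *m G](addrK (l *: row r G)); apply: addmx_sub; rewrite ?eqmx_opp //.
exact: scalemx_sub.
Qed.

Lemma avoid_subspaces (F : finFieldType) m k n (G : 'M[F]_(m, n)) (I : finType)
    (U_ : I -> 'M[F]_(k, n)) : (#|I| < #|F|)%N ->
  exists c : 'rV_m, forall i, ~~ (G <= U_ i)%MS -> ~~ (c *m G <= U_ i)%MS.
Proof.
rewrite cardE => small; have [c cG] := avoid_subspaces_seq G U_ small.
by exists c => i; apply: cG; rewrite mem_enum.
Qed.

End Avoidance.

Section GenericCode.
Local Open Scope ring_scope.
Variables (V E : finType) (tl hd : E -> V) (s1 s2 : V).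
Hypothesis acyclic_net : acyclic tl hd.
Hypothesis sources_neq : s1 != s2.
Hypothesis no_edge_into_source : forall e : E, hd e != s1 /\ hd e != s2.
Variables (F : finFieldType) (R1 R2 : nat).

(* Messages are vectors of F^n: the first R1 coordinates are the symbols of s1,
   the last R2 those of s2.  A code assigns to each edge e a global coding
   vector f e, the symbol carried by e being f e times the message. *)
Local Notation n := (R1 + R2)%N.
Local Notation topo_index := (topo_index tl hd).
Local Notation reach C := (connect (erel_avoid tl hd C)).
Implicit Types (A C : {set E}) (J : {set 'I_n}) (f : E -> 'rV[F]_n) (v t : V).

Definition in_edges (v : V) : {set E} := [set d | hd d == v].
Definition coords1 : {set 'I_n} := [set k : 'I_n | (k < R1)%N].
Definition coords2 : {set 'I_n} := [set k : 'I_n | (R1 <= k)%N].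

Definition source_coords (v : V) : {set 'I_n} :=
  if v == s1 then coords1 else if v == s2 then coords2 else set0.

Lemma source_coords1 : source_coords s1 = coords1.
Proof. by rewrite /source_coords eqxx. Qed.

Lemma source_coords2 : source_coords s2 = coords2.
Proof. by rewrite /source_coords eq_sym (negbTE sources_neq) eqxx. Qed.

Definition local_span f e := span_mx f (in_edges (tl e)) (source_coords (tl e)).

Definition generic f e := forall A J,
  (forall a, a \in A -> (topo_index a < topo_index e)%N) ->
  ~~ (local_span f e <= span_mx f A J)%MS -> ~~ (f e <= span_mx f A J)%MS.

Definition coded (ce : E -> 'rV[F]_(#|E| + n)) f e :=
  f e = ce e *m local_span f e /\ generic f e.

Lemma local_span_agree f f' e :
  (forall d, (topo_index d < topo_index e)%N -> f d = f' d) -> local_span f e = local_span f' e.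
Proof.
move=> agree; apply: span_mx_eq => d; rewrite inE => /eqP hde.
exact/agree/(topo_index_lt acyclic_net).
Qed.

Lemma span_mx_agree f f' e A J :
  (forall d, (topo_index d < topo_index e)%N -> f d = f' d) ->
  (forall a, a \in A -> (topo_index a < topo_index e)%N) -> span_mx f A J = span_mx f' A J.
Proof. by move=> agree earlier; apply: span_mx_eq => a /earlier/agree. Qed.

Lemma coded_agree ce ce' f f' e : ce e = ce' e ->
  (forall d, (topo_index d <= topo_index e)%N -> f d = f' d) ->
  coded ce f e -> coded ce' f' e.
Proof.
move=> eq_ce agree [f_e gen_e]; have agree_lt d (lt_de : (topo_index d < topo_index e)%N) :=
  agree d (ltnW lt_de).
have eq_local := local_span_agree agree_lt.
split; first by rewrite -agree // -eq_ce -eq_local.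
move=> A J earlier; rewrite -eq_local -agree // -(span_mx_agree J agree_lt earlier).
exact: gen_e.
Qed.

(* Over a large enough field a generic code exists: define the coding vectors
   edge by edge in topological order, choosing each one by avoidance. *)
Lemma generic_code_exists : (#|{: {set E} * {set 'I_n}}| < #|F|)%N ->
  exists ce f, forall e, coded ce f e.
Proof.
move=> large; suff below p : exists ce f, forall e, (topo_index e < p)%N -> coded ce f e.
  have [ce [f cf]] := below (#|E|.+1 * #|E|)%N.
  by exists ce, f => e; apply/cf/topo_index_bound.
elim: p => [|p [ce [f IH]]]; first by exists (fun=> 0), (fun=> 0).
have [e /eqP idx_e|none] := pickP (fun e => topo_index e == p); last first.
  exists ce, f => x; rewrite ltnS leq_eqVlt => /predU1P[idx_x|]; last exact: IH.
  by move: (none x); rewrite idx_x eqxx.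
have [c c_gen] := avoid_subspaces (local_span f e)
  (fun AJ : {set E} * {set 'I_n} => span_mx f AJ.1 AJ.2) large.
pose f' x := if x == e then c *m local_span f e else f x.
pose ce' x := if x == e then c else ce x.
have agree x : (topo_index x < p)%N -> f' x = f x.
  by rewrite /f'; case: eqP => // ->; rewrite idx_e ltnn.
exists ce', f' => x; rewrite ltnS leq_eqVlt => /predU1P[idx_x|lt_xp].
  have -> : x = e by apply: (@topo_index_inj _ _ tl hd); rewrite idx_x idx_e.
  have eq_local : local_span f' e = local_span f e.
    by apply: local_span_agree => d; rewrite idx_e => /agree.
  split; first by rewrite eq_local /f' /ce' !eqxx.
  move=> A J earlier; have eq_span : span_mx f' A J = span_mx f A J.
    by apply: (span_mx_agree J _ earlier) => d; rewrite idx_e => /agree.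
  by rewrite eq_local eq_span /f' eqxx; apply: (c_gen (A, J)).
apply: coded_agree (IH x lt_xp) => [|d le_dx].
  by rewrite /ce'; case: eqP => // xe; move: lt_xp; rewrite xe idx_e ltnn.
by rewrite agree //; exact: leq_ltn_trans le_dx lt_xp.
Qed.

Lemma card_coords1 : #|coords1| = R1.
Proof.
rewrite -sum1_card big_split_ord /= [X in (_ + X)%N]big_pred0 => [|j].
  rewrite (eq_bigl xpredT) => [|i]; last by rewrite inE /= ltn_ord.
  by rewrite sum1_card card_ord addn0.
by rewrite inE /= ltnNge leq_addr.
Qed.

Lemma card_coords2 : #|coords2| = R2.
Proof.
rewrite -sum1_card big_split_ord /= [X in (X + _)%N]big_pred0 => [|j].
  rewrite (eq_bigl xpredT) => [|i]; last by rewrite inE /= leq_addr.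
  by rewrite sum1_card card_ord.
by rewrite inE /= leqNgt ltn_ord.
Qed.

Lemma coords_cover J : coords1 \subset J -> coords2 \subset J -> (n <= #|J|)%N.
Proof.
move=> sub1 sub2; rewrite -{1}[n]card_ord -cardsT subset_leq_card //.
by apply/subsetP=> k _; case: (ltnP k R1) => k_R1; [apply: (subsetP sub1) | apply: (subsetP sub2)];
  rewrite inE.
Qed.

Definition covered (C : {set E}) J (v : V) : Prop :=
  (reach C s1 v -> coords1 \subset J) /\ (reach C s2 v -> coords2 \subset J).

Lemma covered_subset C C' J v : C \subset C' -> covered C J v -> covered C' J v.
Proof. by move=> sCC' [cov1 cov2]; split=> /(reach_subset sCC'); [apply: cov1 | apply: cov2]. Qed.

Lemma covered_in_edges C J v : source_coords v \subset J ->
  (forall d, hd d = v -> d \notin C -> covered C J (tl d)) -> covered C J v.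
Proof.
move=> srcJ cov_in; split=> r.
  have [s1v|neq] := eqVneq s1 v; first by rewrite -source_coords1 s1v.
  by have [d [dC hdv rd]] := reach_last_edge r neq; exact: (cov_in d hdv dC).1 rd.
have [s2v|neq] := eqVneq s2 v; first by rewrite -source_coords2 s2v.
by have [d [dC hdv rd]] := reach_last_edge r neq; exact: (cov_in d hdv dC).2 rd.
Qed.

Section FixedCode.
Variables (ce : E -> 'rV[F]_(#|E| + n)) (f : E -> 'rV[F]_n).
Hypothesis f_coded : forall e, coded ce f e.

Lemma span_absorb A J e : (local_span f e <= span_mx f A J)%MS ->
  (span_mx f (A :|: in_edges (tl e)) (J :|: source_coords (tl e)) <= span_mx f A J)%MS.
Proof.
move=> absorbed; apply: span_mx_subP => [a|j]; rewrite inE => /orP[inA|inl].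
- exact: span_mx_sub_edge.
- exact: submx_trans (span_mx_sub_edge _ _ inl) absorbed.
- exact: span_mx_sub_unit.
- exact: submx_trans (span_mx_sub_unit _ _ inl) absorbed.
Qed.

Lemma rank_new_edge A J e : e \in A -> ~~ (f e <= span_mx f (A :\ e) J)%MS ->
  (\rank (span_mx f (A :\ e) J) < \rank (span_mx f A J))%N.
Proof.
move=> eA new; apply: rank_ltmx; rewrite ltmxE span_mx_mono ?subsetDl //=.
by apply: contra new; apply: submx_trans; exact: span_mx_sub_edge.
Qed.

Lemma rank_lower_bound A J : exists J' C, [/\ J \subset J',
  forall a, a \in A -> a \notin C -> covered C J' (tl a)
  & (#|J'| + #|C| <= \rank (span_mx f A J))%N].
Proof.
suff below p : forall A J, (forall a, a \in A -> (topo_index a < p)%N) -> exists J' C,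
    [/\ J \subset J', forall a, a \in A -> a \notin C -> covered C J' (tl a)
     & (#|J'| + #|C| <= \rank (span_mx f A J))%N].
  by apply: below => a _; exact: topo_index_bound.
elim: p => [|p IH] {}A {}J earlier.
  exists J, set0; split=> // [a /earlier //|]; rewrite cards0 addn0.
  by apply: leq_trans (rank_unit_mx F J) (mxrankS _); rewrite -addsmxE addsmxSr.
have [e /andP[eA /eqP idx_e]|none] := pickP (fun e => (e \in A) && (topo_index e == p)); last first.
  apply: IH => a aA; move: (earlier a aA) (none a); rewrite aA ltnS leq_eqVlt.
  by case/predU1P=> [->|]; rewrite ?eqxx.
have earlier' a : a \in A :\ e -> (topo_index a < p)%N.
  rewrite !inE => /andP[ae aA]; move: (earlier a aA); rewrite ltnS leq_eqVlt.
  case/predU1P=> // idx_a; case/eqP: ae; apply: (@topo_index_inj _ _ tl hd).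
  by rewrite idx_a idx_e.
have [absorbed|fresh] := boolP (local_span f e <= span_mx f (A :\ e) J)%MS.
  have [|J' [C [sJ cov bound]]] := IH (A :\ e :|: in_edges (tl e)) (J :|: source_coords (tl e)).
    move=> a; rewrite inE => /orP[/earlier'//|]; rewrite inE => /eqP hd_a.
    by rewrite -idx_e; exact: topo_index_lt.
  exists J', C; split; first exact: subset_trans (subsetUl _ _) sJ.
  - move=> a aA aC; have [-> {a aA aC}|ae] := eqVneq a e; last first.
      by apply: cov aC; rewrite !inE ae aA.
    apply: covered_in_edges => [|d /eqP hd_d dC]; first exact: subset_trans (subsetUr _ _) sJ.
    by apply: cov dC; rewrite !inE hd_d orbT.
  - apply: leq_trans bound (mxrankS (submx_trans (span_absorb absorbed) _)).
    by apply: span_mx_mono; rewrite ?subsetDl.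
have [J' [C [sJ cov bound]]] := IH (A :\ e) J earlier'.
exists J', (e |: C); split=> // [a aA|].
  rewrite !inE negb_or => /andP[ae aC]; apply: covered_subset (subsetUr _ _) _.
  by apply: cov aC; rewrite !inE ae aA.
have new : ~~ (f e <= span_mx f (A :\ e) J)%MS.
  by apply: (f_coded e).2 fresh => a /earlier'; rewrite idx_e.
by rewrite cardsU1 addnCA; apply: leq_trans (leq_add (leq_b1 _) bound) (rank_new_edge eA new).
Qed.

Lemma terminal_rank t r1 r2 : s1 != t -> s2 != t ->
  (r1 <= R1)%N -> (r2 <= R2)%N ->
  (r1 <= mincut tl hd [set s1] [set t])%N -> (r2 <= mincut tl hd [set s2] [set t])%N ->
  (r1 + r2 <= mincut tl hd [set s1; s2] [set t])%N ->
  (r1 + r2 <= \rank (edge_mx f (in_edges t)))%N.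
Proof.
move=> s1t s2t r1R1 r2R2 r1k r2k r12k.
have [J' [C [_ cov bound]]] := rank_lower_bound (in_edges t) set0.
have [cov1 cov2] : covered C J' t.
  apply: covered_in_edges => [|d hdt dC]; last by apply: cov dC; rewrite inE hdt.
  by rewrite /source_coords eq_sym (negbTE s1t) eq_sym (negbTE s2t) sub0set.
apply: leq_trans (leq_trans bound (mxrankS _)); last first.
  by rewrite col_mx_sub submx_refl; apply: unit_mx_subP => j; rewrite inE.
have [c1|/(contra cov1) u1] := boolP (coords1 \subset J');
  have [c2|/(contra cov2) u2] := boolP (coords2 \subset J').
- exact: leq_trans (leq_add r1R1 r2R2) (leq_trans (coords_cover c1 c2) (leq_addr _ _)).
- apply: leq_add.
    by apply: leq_trans r1R1 _; rewrite -[X in (X <= _)%N]card_coords1 subset_leq_card.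
  by apply: leq_trans r2k (mincut_le _); rewrite is_cut_single.
- rewrite addnC; apply: leq_add.
    by apply: leq_trans r2R2 _; rewrite -[X in (X <= _)%N]card_coords2 subset_leq_card.
  by apply: leq_trans r1k (mincut_le _); rewrite is_cut_single.
- apply: leq_trans r12k (leq_trans (mincut_le _) (leq_addl _ _)).
  by rewrite is_cut_pair u1 u2.
Qed.

Definition coef1 e (j : 'I_R1) : F := ce e 0 (rshift #|E| (lshift R2 j)).
Definition coef2 e (j : 'I_R2) : F := ce e 0 (rshift #|E| (rshift R1 j)).
Definition coef_in (d e : E) : F := ce e 0 (lshift n (enum_rank d)).

Lemma local_combination e (X : 'cV[F]_n) : (f e *m X) 0 0 =
  \sum_(i < #|E|) ce e 0 (lshift n i) *
     (if enum_val i \in in_edges (tl e) then (f (enum_val i) *m X) 0 0 else 0)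
  + \sum_(j < n) ce e 0 (rshift #|E| j) * (if j \in source_coords (tl e) then X j 0 else 0).
Proof.
rewrite (f_coded e).1 -mulmxA mxE /local_span /span_mx mul_col_mx big_split_ord /=.
by congr (_ + _); apply: eq_bigr => i _; rewrite ?col_mxEu ?col_mxEd ?edge_mx_mul ?unit_mx_mul.
Qed.

Lemma sum_in_edges e v (Y : E -> F) :
  \sum_(i < #|E|) ce e 0 (lshift n i) * (if enum_val i \in in_edges v then Y (enum_val i) else 0)
  = \sum_(d : E | hd d == v) coef_in d e * Y d.
Proof.
rewrite (reindex (@enum_val E (mem E))) /=; last first.
  by exists enum_rank => i _; rewrite ?enum_valK ?enum_rankK.
rewrite [RHS]big_mkcond; apply: eq_bigr => i _.
by rewrite inE /coef_in enum_valK; case: ifP; rewrite ?mulr0.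
Qed.

Lemma sum_coords1 e (x1 : 'rV[F]_R1) (x2 : 'rV[F]_R2) :
  \sum_(j < n) ce e 0 (rshift #|E| j) * (if j \in coords1 then (row_mx x1 x2)^T j 0 else 0)
  = \sum_(j < R1) coef1 e j * x1 0 j.
Proof.
rewrite big_split_ord /= [X in (_ + X)%R]big1 ?addr0 => [|j _]; last first.
  by rewrite inE /= ltnNge leq_addr mulr0.
by apply: eq_bigr => j _; rewrite inE /= ltn_ord mxE row_mxEl.
Qed.

Lemma sum_coords2 e (x1 : 'rV[F]_R1) (x2 : 'rV[F]_R2) :
  \sum_(j < n) ce e 0 (rshift #|E| j) * (if j \in coords2 then (row_mx x1 x2)^T j 0 else 0)
  = \sum_(j < R2) coef2 e j * x2 0 j.
Proof.
rewrite big_split_ord /= [X in (X + _)%R]big1 ?add0r => [|j _]; last first.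
  by rewrite inE /= leqNgt ltn_ord mulr0.
by apply: eq_bigr => j _; rewrite inE /= leq_addr mxE row_mxEr.
Qed.

Lemma sum_into_source v (G : E -> F) :
  (v == s1) || (v == s2) -> \sum_(d : E | hd d == v) G d = 0.
Proof.
move=> v_src; apply: big_pred0 => d; have [n1 n2] := no_edge_into_source d.
by apply/negbTE; case/orP: v_src => /eqP->.
Qed.

Lemma induced_symbolsE x1 x2 y :
  induced_symbols tl hd s1 s2 coef1 coef2 coef_in x1 x2 y ->
  forall e, y e = (f e *m (row_mx x1 x2)^T) 0 0.
Proof.
move=> y_ind; apply: (dag_ind acyclic_net) => e IH.
rewrite y_ind local_combination (sum_in_edges _ _ (fun d => (f d *m (row_mx x1 x2)^T) 0 0)).
rewrite /source_coords; case: ifP => [e_s1|_].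
  by rewrite sum_into_source ?e_s1 // add0r sum_coords1.
case: ifP => [e_s2|_].
  by rewrite sum_into_source ?e_s2 ?orbT // add0r sum_coords2.
rewrite [X in (_ + X)%R]big1 ?addr0 => [|j _]; last by rewrite inE mulr0.
by apply: eq_bigr => d /eqP hd_d; rewrite IH.
Qed.

Lemma decode_span t m (u : 'M[F]_(m, n)) x1 x2 y x1' x2' y' :
  induced_symbols tl hd s1 s2 coef1 coef2 coef_in x1 x2 y ->
  induced_symbols tl hd s1 s2 coef1 coef2 coef_in x1' x2' y' ->
  (forall d, hd d == t -> y d = y' d) -> (u <= edge_mx f (in_edges t))%MS ->
  u *m (row_mx x1 x2)^T = u *m (row_mx x1' x2')^T.
Proof.
move=> y_ind y'_ind same_at_t /submxP[D ->]; rewrite -!mulmxA; congr (D *m _).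
apply/matrixP => i j; rewrite (ord1 j) !edge_mx_mul; case: ifP => // /[!inE] hd_i.
by rewrite -(induced_symbolsE y_ind) -(induced_symbolsE y'_ind) same_at_t.
Qed.

Definition proj_s1 : 'M[F]_(n, R1) := col_mx 1%:M 0.

Lemma proj1_behind_cut C d : (d \in C) || ~~ reach C s1 (tl d) ->
  (f d *m proj_s1 <= edge_mx (fun x => f x *m proj_s1) C)%MS.
Proof.
move: d; apply: (dag_ind acyclic_net) => d IH /orP[dC|unreach].
  exact: (edge_mx_sub (fun x => f x *m proj_s1) dC).
rewrite (f_coded d).1 -mulmxA; apply: submx_trans (submxMl _ _) _.
rewrite /local_span /span_mx mul_col_mx col_mx_sub; apply/andP; split.
  apply/row_subP => i; rewrite row_mul row_edge_mx; case: ifP => [/[!inE] /eqP hd_i|_].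
    apply: IH => //; apply/orP; have [|nC] := boolP (enum_val i \in C); [by left | right].
    by apply: contra unreach; rewrite -hd_i; exact: reach_edge.
  by rewrite mul0mx sub0mx.
have tl_s1 : tl d != s1 by apply: contra unreach => /eqP->; exact: connect0.
apply/row_subP => j; rewrite row_mul row_unit_mx /source_coords (negbTE tl_s1).
case: (tl d == s2); last by rewrite inE mul0mx sub0mx.
case: ifP => [/[!inE] R1_j|_]; last by rewrite mul0mx sub0mx.
rewrite -rowE /proj_s1; case: (splitP j) R1_j => [j1 -> |j2 j_eq _].
  by rewrite leqNgt ltn_ord.
have -> : j = rshift R1 j2 by apply: val_inj.
by rewrite rowKd row0 sub0mx.
Qed.

Lemma rank_proj1 C t : ~~ reach C s1 t ->
  (\rank (edge_mx f (in_edges t) *m proj_s1) <= #|C|)%N.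
Proof.
move=> unreach; apply: leq_trans (mxrankS _) (rank_edge_mx _ C).
apply/row_subP => i; rewrite row_mul row_edge_mx; case: ifP => [/[!inE] /eqP hd_i|_].
  apply: proj1_behind_cut; apply/orP; have [|nC] := boolP (enum_val i \in C); [by left | right].
  by apply: contra unreach; rewrite -hd_i; exact: reach_edge.
by rewrite mul0mx sub0mx.
Qed.

Lemma decode_full t x1 x2 y x1' x2' y' :
  induced_symbols tl hd s1 s2 coef1 coef2 coef_in x1 x2 y ->
  induced_symbols tl hd s1 s2 coef1 coef2 coef_in x1' x2' y' ->
  (forall d, hd d == t -> y d = y' d) -> row_full (edge_mx f (in_edges t)) ->
  row_mx x1 x2 = row_mx x1' x2'.
Proof.
move=> y_ind y'_ind same_at_t full; apply: trmx_inj.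
by have := decode_span y_ind y'_ind same_at_t (submx_full 1%:M full); rewrite !mul1mx.
Qed.

Lemma decode_second t x1 x2 y x1' x2' y' :
  induced_symbols tl hd s1 s2 coef1 coef2 coef_in x1 x2 y ->
  induced_symbols tl hd s1 s2 coef1 coef2 coef_in x1' x2' y' ->
  (forall d, hd d == t -> y d = y' d) ->
  (row_mx (0 : 'M_(R2, R1)) 1%:M <= edge_mx f (in_edges t))%MS -> x2 = x2'.
Proof.
move=> y_ind y'_ind same_at_t sub; apply: trmx_inj.
have := decode_span y_ind y'_ind same_at_t sub.
by rewrite !tr_row_mx !mul_row_col !mul0mx !add0r !mul1mx.
Qed.

Lemma kermx_proj1 : (kermx proj_s1 <= row_mx (0 : 'M_(R2, R1)) 1%:M)%MS.
Proof.
apply/row_subP => i.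
have /sub_kermxP : (row i (kermx proj_s1) <= kermx proj_s1)%MS by exact: row_sub.
move: (row i _) => r; rewrite -[r]hsubmxK /proj_s1 mul_row_col mulmx1 mulmx0 addr0 => ->.
have -> : row_mx 0 (rsubmx r) = rsubmx r *m row_mx (0 : 'M_(R2, R1)) 1%:M.
  by rewrite mul_mx_row mulmx0 mulmx1.
exact: submxMl.
Qed.

(* The s2 coordinates are in the span at t2 when the s1-part there is limited
   by the s1-t2 cut, leaving room for R2 more dimensions. *)
Lemma second_block_in_span t : s1 != t -> s2 != t ->
  (R2 <= mincut tl hd [set s2] [set t])%N ->
  (mincut tl hd [set s1] [set t] + R2 <= mincut tl hd [set s1; s2] [set t])%N ->
  (row_mx (0 : 'M_(R2, R1)) 1%:M <= edge_mx f (in_edges t))%MS.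
Proof.
move=> s1t s2t R2k hk; set S := edge_mx f (in_edges t).
have [|C cut_C card_C] := mincut_attained tl hd (_ : [disjoint [set s1] & [set t]]).
  by rewrite disjoints1 inE.
rewrite is_cut_single in cut_C.
have r_k : (\rank (S *m proj_s1) <= mincut tl hd [set s1] [set t])%N.
  by rewrite -card_C; apply: rank_proj1.
have := terminal_rank s1t s2t (rank_leq_col _) (leqnn R2) r_k R2k
  (leq_trans (leq_add r_k (leqnn _)) hk).
rewrite -(mxrank_mul_ker S proj_s1) leq_add2l => rank_ker.
have sub_Z : (S :&: kermx proj_s1 <= row_mx (0 : 'M_(R2, R1)) 1%:M)%MS.
  exact: submx_trans (capmxSr _ _) kermx_proj1.
have [_ /esym] := mxrank_leqif_sup sub_Z.
rewrite eqn_leq mxrankS //= (leq_trans (rank_leq_row _) rank_ker) => Z_sub.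
exact: submx_trans Z_sub (capmxSl _ _).
Qed.

End FixedCode.

Local Notation k := (mincut tl hd).

Lemma generic_code_decodes t1 t2 :
  (#|{: {set E} * {set 'I_n}}| < #|F|)%N ->
  [&& s1 != t1, s1 != t2, s2 != t1 & s2 != t2] ->
  (k [set s1] [set t2] + k [set s2] [set t1] <= k [set s1; s2] [set t2])%N ->
  (R1 <= k [set s1] [set t1])%N -> (R2 <= k [set s2] [set t1])%N ->
  (R1 + R2 <= k [set s1; s2] [set t1])%N ->
  exists (a1 : E -> 'I_R1 -> F) (a2 : E -> 'I_R2 -> F) (b : E -> E -> F),
    (forall x1 x2 x1' x2' y y',
        induced_symbols tl hd s1 s2 a1 a2 b x1 x2 y ->
        induced_symbols tl hd s1 s2 a1 a2 b x1' x2' y' ->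
        (forall d, hd d == t1 -> y d = y' d) -> x1 = x1') /\
    (forall x1 x2 x1' x2' y y',
        induced_symbols tl hd s1 s2 a1 a2 b x1 x2 y ->
        induced_symbols tl hd s1 s2 a1 a2 b x1' x2' y' ->
        (forall d, hd d == t2 -> y d = y' d) -> x2 = x2').
Proof.
move=> large /and4P[s1t1 s1t2 s2t1 s2t2] hk R1k R2k R12k.
have [ce [f f_coded]] := generic_code_exists large.
exists (coef1 ce), (coef2 ce), (coef_in ce); split=> x1 x2 x1' x2' y y' y_ind y'_ind same.
  have full : row_full (edge_mx f (in_edges t1)).
    rewrite /row_full eqn_leq rank_leq_col andTb.
    exact: (terminal_rank f_coded s1t1 s2t1 (leqnn R1) (leqnn R2) R1k R2k R12k).
  by have /eq_row_mx[] := decode_full f_coded y_ind y'_ind same full.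
(* the cut condition forces k(s2,t1) <= k(s2,t2) by subadditivity of min-cuts *)
have k2 : (k [set s2] [set t1] <= k [set s2] [set t2])%N.
  by rewrite -(leq_add2l (k [set s1] [set t2])) (leq_trans hk) ?mincut_pair_le.
apply: (decode_second f_coded y_ind y'_ind same).
apply: (second_block_in_span f_coded s1t2 s2t2 (leq_trans R2k k2)).
exact: leq_trans (leq_add (leqnn _) R2k) hk.
Qed.

End GenericCode.

Lemma large_finField (N : nat) : exists F : finFieldType, (N < #|F|)%N.
Proof. by have [p N_p p_prime] := prime_above N; exists 'F_p; rewrite card_Fp. Qed.

Lemma induced_symbols_swap (F : fieldType) (V E : finType) (tl hd : E -> V) (s1 s2 : V)
    R1 R2 a1 a2 b (x1 : 'rV[F]_R1) (x2 : 'rV[F]_R2) y : s1 != s2 ->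
  induced_symbols tl hd s2 s1 a2 a1 b x2 x1 y <-> induced_symbols tl hd s1 s2 a1 a2 b x1 x2 y.
Proof.
move=> s12; split=> y_ind e; rewrite y_ind;
  case: (eqVneq (tl e) s1) => [->|ne1]; rewrite ?eqxx ?(negbTE s12) ?(negbTE ne1) //;
  by case: (eqVneq (tl e) s2) => [->|ne2]; rewrite ?eqxx ?(negbTE ne2) // eq_sym (negbTE s12).
Qed.

Lemma achievable_swap (V E : finType) (tl hd : E -> V) (s1 s2 t1 t2 : V) (R1 R2 : nat) :
  s1 != s2 -> achievable tl hd s2 s1 t2 t1 R2 R1 -> achievable tl hd s1 s2 t1 t2 R1 R2.
Proof.
move=> s12 [F [a2 [a1 [b [dec2 dec1]]]]]; exists F, a1, a2, b.
have swap x1 x2 y := iffRL (@induced_symbols_swap F V E tl hd s1 s2 R1 R2 a1 a2 b x1 x2 y s12).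
split=> x1 x2 x1' x2' y y' /swap y_ind /swap y'_ind same.
  exact: dec1 y_ind y'_ind same.
exact: dec2 y_ind y'_ind same.
Qed.

Lemma achievable_cut_region (V E : finType) (tl hd : E -> V) (s1 s2 t1 t2 : V) :
  acyclic tl hd -> s1 != s2 -> (forall e : E, hd e != s1 /\ hd e != s2) ->
  [&& s1 != t1, s1 != t2, s2 != t1 & s2 != t2] ->
  mincut tl hd [set s1] [set t2] + mincut tl hd [set s2] [set t1]
    <= mincut tl hd [set s1; s2] [set t2] ->
  forall R1 R2 : nat,
    R1 <= mincut tl hd [set s1] [set t1] -> R2 <= mincut tl hd [set s2] [set t1] ->
    R1 + R2 <= mincut tl hd [set s1; s2] [set t1] ->
    achievable tl hd s1 s2 t1 t2 R1 R2.
Proof.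
move=> acyc s12 no_in st hk R1 R2 R1k R2k R12k.
have [F large] := large_finField #|{: {set E} * {set 'I_(R1 + R2)}}|.
by exists F; apply: (generic_code_decodes acyc s12 no_in large st hk R1k R2k R12k).
Qed.

Theorem mainTheorem8 (V E : finType) (tl hd : E -> V) (s1 s2 t1 t2 : V)
  (hacyc : acyclic tl hd)
  (hs12 : s1 != s2) (ht12 : t1 != t2)
  (hst : [&& s1 != t1, s1 != t2, s2 != t1 & s2 != t2])
  (hsrc : forall e : E, hd e != s1 /\ hd e != s2)
  (hterm : forall e : E, tl e != t1 /\ tl e != t2) :
  let k := fun (S T : {set V}) => mincut tl hd S T in
  k [set s1] [set t2] + k [set s2] [set t1]
    <= minn (k [set s1; s2] [set t1]) (k [set s1; s2] [set t2]) ->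
  (k [set s1] [set t2] <= k [set s1] [set t1] ->
     forall R1 R2 : nat,
       R1 <= k [set s1] [set t1] -> R2 <= k [set s2] [set t1] ->
       R1 + R2 <= k [set s1; s2] [set t1] ->
       achievable tl hd s1 s2 t1 t2 R1 R2) /\
  (k [set s2] [set t1] <= k [set s2] [set t2] ->
     forall R1 R2 : nat,
       R1 <= k [set s1] [set t2] -> R2 <= k [set s2] [set t2] ->
       R1 + R2 <= k [set s1; s2] [set t2] ->
       achievable tl hd s1 s2 t1 t2 R1 R2).
Proof.
cbv zeta => hk; split=> _ R1 R2 R1k R2k R12k.
  apply: achievable_cut_region => //; exact: leq_trans hk (geq_minr _ _).
(* the second region is the first one for the network with the sessions exchanged *)
apply: achievable_swap => //; apply: achievable_cut_region => //.
- by rewrite eq_sym.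
- by move=> e; have [] := hsrc e.
- by case/and4P: hst => -> -> -> ->.
- by rewrite setUC addnC; exact: leq_trans hk (geq_minl _ _).
- by rewrite setUC addnC.
Qed.
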